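(* Let $f: \mathbb{R}^n \to \mathbb{R}^n$ be topical, $\lambda \in \mathbb{R}$ and $k$ a positive integer. If $S^\lambda(f^k) \neq \emptyset$, then $S^{\lambda/k}(f) \neq \emptyset$.
   Context: $f$ is topical if $f(x+h) = f(x)+h$ for all $h\in\mathbb{R}$ (scalar added to each coordinate) and $x\le y$ componentwise implies $f(x)\le f(y)$. For a map $g$, $S^\lambda(g) = \{x\in\mathbb{R}^n : g(x) \le \lambda + x\}$. *)

From mathcomp Require Import all_boot all_order all_algebra.
From mathcomp Require Import reals.
Set Implicit Arguments. Unset Strict Implicit. Unset Printing Implicit Defensive.
Import Order.TTheory GRing.Theory Num.Theory.
Local Open Scope ring_scope.

Definition vec (R : realType) (n : nat) := 'I_n -> R.

Definition vle (R : realType) (n : nat) (x y : vec R n) : Prop :=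
  forall i, x i <= y i.

Definition vshift (R : realType) (n : nat) (x : vec R n) (h : R) : vec R n :=
  fun i => x i + h.

Definition topical (R : realType) (n : nat) (f : vec R n -> vec R n) : Prop :=
  (forall (x : vec R n) (h : R), f (vshift x h) = vshift (f x) h) /\
  (forall x y : vec R n, vle x y -> vle (f x) (f y)).

Definition sub_eig (R : realType) (n : nat) (g : vec R n -> vec R n) (lam : R)
  : vec R n -> Prop := fun x => vle (g x) (vshift x lam).

From mathcomp Require Import all_boot all_order all_algebra.
From mathcomp Require Import reals.
From Stdlib Require Import FunctionalExtensionality.
From mathcomp Require Import lra.
Import Order.TTheory GRing.Theory Num.Theory.
Set Implicit Arguments. Unset Strict Implicit. Unset Printing Implicit Defensive.
Local Open Scope ring_scope.

(* Let mu = lambda/k and g_j = f^j(x) - j mu.  Topicality gives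
   f(g_j) = g_(j+1) + mu, and f^k(x) <= lambda + x says g_k <= g_0.  The
   componentwise minimum y of g_0, ..., g_(k-1) then works: by monotonicity
   f(y) - mu <= g_(j+1) for every j < k, and g_k may be replaced by g_0, so
   f(y) - mu lies below every g_j, j < k, hence below y. *)

Section VminUpto.
Variables (R : realType) (n : nat).

Fixpoint vmin_upto (g : nat -> vec R n) (j : nat) : vec R n :=
  if j is j'.+1 then fun i => Num.min (vmin_upto g j' i) (g j i) else g 0%N.

Lemma vmin_upto_le (g : nat -> vec R n) j m :
  (m <= j)%N -> vle (vmin_upto g j) (g m).
Proof.
elim: j m => [|j IH] m /=; first by rewrite leqn0 => /eqP -> i.
rewrite leq_eqVlt => /orP [/eqP ->|lt_mj] i; first by rewrite ge_min lexx orbT.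
by rewrite ge_min (IH m lt_mj i).
Qed.

Lemma vmin_upto_greatest (g : nat -> vec R n) j (z : vec R n) :
  (forall m, (m <= j)%N -> vle z (g m)) -> vle z (vmin_upto g j).
Proof.
elim: j => [|j IH] zg i /=; first exact: zg.
by rewrite le_min (IH (fun m lt_mj => zg m (leqW lt_mj)) i) (zg _ (leqnn _)).
Qed.

End VminUpto.

Section Topical.
Variables (R : realType) (n : nat) (f : vec R n -> vec R n).
Hypothesis f_topical : topical f.

Lemma sub_eig_vmin_upto (g : nat -> vec R n) (mu : R) (k : nat) :
  (0 < k)%N -> (forall j, f (g j) = vshift (g j.+1) mu) -> vle (g k) (g 0%N) ->
  sub_eig f mu (vmin_upto g k.-1).
Proof.
move=> k_gt0 f_chain gk_le_g0; set y := vmin_upto g k.-1.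
have fy_le m : (m < k)%N -> vle (f y) (vshift (g m.+1) mu).
  move=> lt_mk; rewrite -f_chain; apply: f_topical.2.
  by apply: vmin_upto_le; rewrite -ltnS prednK.
suff fy_mu_le_y : vle (vshift (f y) (- mu)) y.
  by move=> i; have := fy_mu_le_y i; rewrite /vshift; lra.
apply: vmin_upto_greatest => -[|m] le_mk i; rewrite /vshift.
  have := fy_le k.-1; rewrite prednK // => /(_ (ltnSn _) i).
  by have := gk_le_g0 i; rewrite /vshift; lra.
by have := fy_le m (leq_trans le_mk (leq_pred k)) i; rewrite /vshift; lra.
Qed.

Definition drifted_orbit (x : vec R n) (mu : R) (j : nat) : vec R n :=
  vshift (iter j f x) (- (j%:R * mu)).

Lemma topical_drifted_orbit (x : vec R n) (mu : R) j :
  f (drifted_orbit x mu j) = vshift (drifted_orbit x mu j.+1) mu.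
Proof.
rewrite /drifted_orbit f_topical.1 iterS.
apply: functional_extensionality => i; rewrite /vshift -natr1 mulrDl mul1r.
lra.
Qed.

End Topical.

Theorem lemma2p2 (R : realType) (n : nat) (f : vec R n -> vec R n)
  (lam : R) (k : nat) :
  topical f -> (0 < k)%N ->
  (exists x, sub_eig (iter k f) lam x) ->
  exists y, sub_eig f (lam / k%:R) y.
Proof.
move=> f_topical k_gt0 [x fkx_le].
set mu := lam / k%:R.
have k_mu : k%:R * mu = lam by rewrite /mu mulrCA mulfV ?mulr1 // pnatr_eq0 -lt0n.
exists (vmin_upto (drifted_orbit f x mu) k.-1).
apply: sub_eig_vmin_upto => //; first exact: topical_drifted_orbit.
move=> i; have := fkx_le i; rewrite /drifted_orbit /vshift /= k_mu mul0r; lra.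
Qed.
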